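(* If $A\in\{0,1\}^{N\times n}$ is such that every row of $A$ has at most $k$ nonzero entries, then $\mathsf{m}^{rd}(2k+1,A)\ge(2n)^{-2k}(2k)^{-1/4}$.
   Context: For $A\in\{0,1\}^{N\times n}$ and $m\ge0$, unit vectors $U_1,\dots,U_N,V_1,\dots,V_n\in\mathbb{R}^d$ form a margin-$m$, relative-bias-$0$ embedding of $A$ in dimension $d$ if $\langle U_j,V_i\rangle\ge m$ whenever $A_{ji}=1$ and $\langle U_j,V_i\rangle\le -m$ whenever $A_{ji}=0$. $\mathsf{m}^{rd}(d,A)$ is the supremum of $m\ge0$ for which such an embedding exists in dimension $d$ ($-\infty$ if none exists). *)

From HB Require Import structures.
From mathcomp Require Import all_boot all_order all_algebra.
From mathcomp Require Import all_classical all_reals all_analysis.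
Set Implicit Arguments. Unset Strict Implicit. Unset Printing Implicit Defensive.
Import Order.TTheory GRing.Theory Num.Theory.
Local Open Scope ring_scope.
Local Open Scope classical_set_scope.

Definition dotv (R : realType) (d : nat) (u v : 'rV[R]_d) : R :=
  \sum_(i < d) u ord0 i * v ord0 i.

Definition unitv (R : realType) (d : nat) (u : 'rV[R]_d) : Prop :=
  dotv u u = 1.

(* U_1..U_N, V_1..V_n unit vectors in R^d forming a margin-m, relative-bias-0
   embedding of A. *)
Definition rd_embedding (R : realType) (d N n : nat) (A : 'M[bool]_(N, n))
    (m : R) (U : 'I_N -> 'rV[R]_d) (V : 'I_n -> 'rV[R]_d) : Prop :=
  (forall j, unitv (U j)) /\ (forall i, unitv (V i)) /\
  (forall j i, A j i -> m <= dotv (U j) (V i)) /\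
  (forall j i, ~~ A j i -> dotv (U j) (V i) <= - m).

(* m^rd(d, A): supremum (in the extended reals) of admissible margins m >= 0;
   -oo when no embedding exists (sup of the empty set). *)
Definition mrd {R : realType} (d N n : nat) (A : 'M[bool]_(N, n)) : \bar R :=
  ereal_sup [set (m%:E) | m in
    [set m : R | 0 <= m /\ exists (U : 'I_N -> 'rV[R]_d) (V : 'I_n -> 'rV[R]_d), rd_embedding A m U V]].

(* Put column i at the node t_i = (2i - (n-1)) / max(n-1, 1) of [-1, 1] and
   represent it by its moment vector (1, t_i, ..., t_i^(2k)).  Distinct nodes
   satisfy (t_i - t_i')^2 >= g := 4 / max(n-1, 1)^2, so the polynomial
   p_S = 1 - 2 g^-|S| prod_(i in S) (X - t_i)^2 of degree 2|S| <= 2k takes the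
   value 1 at the nodes of S and a value <= -1 at all other nodes; represent a
   row with support S by the coefficient vector of p_S.  The inner products then
   have the required signs with margin 1, and normalizing divides the margin by
   the two Euclidean norms.  The coefficients of prod (X - t_i)^2 are dominated
   in absolute value by those of (X + 1)^(2|S|), whose sum is 4^|S|, so the row
   vector has norm at most 1 + 2 max(n-1, 1)^(2k); the moment vector has norm at
   most sqrt(2k+1), and exactly 1 when n = 1 (the cruder bound fails for
   n = k = 1).  The product of the two norms is at most (2n)^(2k), so the margin
   is at least (2n)^(-2k), which dominates the stated bound. *)

From HB Require Import structures.
From mathcomp Require Import all_boot all_order all_algebra.
From mathcomp Require Import all_classical all_reals all_analysis.
From mathcomp Require Import ring lra zify.
Set Implicit Arguments. Unset Strict Implicit.
Import Order.TTheory GRing.Theory Num.Theory.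
Local Open Scope ring_scope.

Section InnerProduct.
Variables (R : realType) (d : nat).
Implicit Types (u v : 'rV[R]_d) (a b : R).

Definition normv u : R := Num.sqrt (dotv u u).

Definition normalize u : 'rV[R]_d := (normv u)^-1 *: u.

Lemma dotvZ a b u v : dotv (a *: u) (b *: v) = a * b * dotv u v.
Proof. rewrite /dotv mulr_sumr; apply: eq_bigr => i _; rewrite !mxE; ring. Qed.

Lemma dotv_normalize u v :
  dotv (normalize u) (normalize v) = dotv u v / (normv u * normv v).
Proof. rewrite /normalize dotvZ invfM; ring. Qed.

Lemma unitv_normalize u : 0 < dotv u u -> unitv (normalize u).
Proof.
move=> u_gt0; rewrite /unitv dotv_normalize /normv -expr2 sqr_sqrtr ?ltW //.
by rewrite divff ?gt_eqF.
Qed.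

Lemma sqr_coord_le_dotv u l : u ord0 l ^+ 2 <= dotv u u.
Proof.
rewrite /dotv (bigD1 l) //= -expr2 lerDl sumr_ge0 // => i _.
by rewrite -expr2 sqr_ge0.
Qed.

Lemma dotv_gt0 u : u != 0 -> 0 < dotv u u.
Proof.
move=> u_neq0; have [l ul_neq0] : exists l, u ord0 l != 0.
  apply/existsP; apply: contraR u_neq0 => /existsPn u0.
  by apply/eqP/rowP => l; rewrite mxE; apply/eqP/negPn/u0.
by apply: lt_le_trans (sqr_coord_le_dotv u l); rewrite exprn_even_gt0 ?ul_neq0 ?orbT.
Qed.

Lemma normv_le_sum_norm u : normv u <= \sum_(l < d) `|u ord0 l|.
Proof.
have sum_ge0 : 0 <= \sum_(l < d) `|u ord0 l| by rewrite sumr_ge0.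
rewrite -(ger0_norm sum_ge0) -sqrtr_sqr ler_sqrt ?sqr_ge0 // expr2 mulr_suml.
apply: ler_sum => l _; apply: le_trans (ler_norm _) _.
by rewrite normrM ler_wpM2l // (bigD1 l) //= lerDl sumr_ge0.
Qed.

End InnerProduct.

Lemma mrd_ge_of_sign_pattern (R : realType) (d N n : nat) (A : 'M[bool]_(N, n))
    (m : R) (w : 'I_N -> 'rV[R]_d) (v : 'I_n -> 'rV[R]_d) :
  0 <= m -> (forall j, 0 < dotv (w j) (w j)) -> (forall i, 0 < dotv (v i) (v i)) ->
  (forall j i, m * (normv (w j) * normv (v i)) <= 1) ->
  (forall j i, A j i -> 1 <= dotv (w j) (v i)) ->
  (forall j i, ~~ A j i -> dotv (w j) (v i) <= -1) ->
  (m%:E <= mrd d A)%E.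
Proof.
move=> m_ge0 w_gt0 v_gt0 m_le in1 out1.
apply: ereal_sup_ubound; exists m => //; split => //.
exists (fun j => normalize (w j)), (fun i => normalize (v i)).
have norms_gt0 j i : 0 < normv (w j) * normv (v i) by rewrite mulr_gt0 ?sqrtr_gt0.
do ![split] => [j|i|j i Aji|j i nAji]; rewrite ?dotv_normalize.
- exact: unitv_normalize.
- exact: unitv_normalize.
- by rewrite ler_pdivlMr //; apply: le_trans (m_le j i) (in1 j i Aji).
- rewrite ler_pdivrMr // mulNr.
  by apply: le_trans (out1 j i nAji) _; rewrite lerN2.
Qed.

Section CoefAndPowerVectors.
Variables (R : realType) (d : nat).
Implicit Types (p : {poly R}) (x : R).

Definition coefv p : 'rV[R]_d := \row_(l < d) p`_l.

Definition powv x : 'rV[R]_d := \row_(l < d) x ^+ l.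

Lemma dotv_coefv_powv p x : (size p <= d)%N -> dotv (coefv p) (powv x) = p.[x].
Proof.
move=> size_p; rewrite (horner_coef_wide x size_p) /dotv.
by apply: eq_bigr => l _; rewrite !mxE.
Qed.

Lemma coefv_eq0 p : (size p <= d)%N -> (coefv p == 0) = (p == 0).
Proof.
move=> size_p; apply/eqP/eqP => [p0|->]; last by apply/rowP => l; rewrite !mxE coef0.
apply/polyP => l; rewrite coef0; have [l_lt_d|l_ge_d] := ltnP l d.
  by have /rowP/(_ (Ordinal l_lt_d)) := p0; rewrite !mxE.
exact/leq_sizeP/(leq_trans size_p).
Qed.

Lemma normv_powv_le x : `|x| <= 1 -> normv (powv x) <= Num.sqrt d%:R.
Proof.
move=> x_le1; rewrite ler_sqrt // /dotv -[d in d%:R]card_ord -sumr_const.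
apply: ler_sum => l _; rewrite mxE; apply: le_trans (ler_norm _) _.
by rewrite normrM normrX mulr_ile1 ?exprn_ge0 ?exprn_ile1.
Qed.

Lemma normv_powv0 : (0 < d)%N -> normv (powv 0) = 1.
Proof.
move=> d_gt0; rewrite /normv /dotv (bigD1 (Ordinal d_gt0)) //= big1 => [|l l_neq0].
  by rewrite !mxE expr0 mulr1 addr0 sqrtr1.
rewrite !mxE expr0n; case: eqP => [l0|_]; last by rewrite mul0r.
by case/eqP: l_neq0; apply: val_inj.
Qed.

Lemma dotv_powv_gt0 x : (0 < d)%N -> 0 < dotv (powv x) (powv x).
Proof.
move=> d_gt0; apply: lt_le_trans (sqr_coord_le_dotv _ (Ordinal d_gt0)).
by rewrite mxE expr0 expr1n.
Qed.

End CoefAndPowerVectors.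

Section CoefDomination.
Variable R : realDomainType.
Implicit Types p P : {poly R}.

Definition coef_dominated p P := forall l, `|p`_l| <= P`_l.

Lemma coef_dominated11 : coef_dominated 1 1.
Proof. by move=> l; rewrite coef1; case: (l == 0)%N; rewrite ?normr1 ?normr0. Qed.

Lemma coef_dominated_mulXsubC p P a : coef_dominated p P -> `|a| <= 1 ->
  coef_dominated (p * ('X - a%:P)) (P * ('X + 1)).
Proof.
move=> pP a_le1 [|l]; rewrite mulrBr mulrDr mulr1 coefB coefD !coefMX coefMC //=.
  rewrite sub0r add0r normrN normrM.
  by have := pP 0%N; have := normr_ge0 p`_0; have := normr_ge0 a; nra.
apply: le_trans (ler_normB _ _) _; apply: lerD; first exact: pP.
rewrite normrM; have := pP l.+1; have := normr_ge0 p`_l.+1; have := normr_ge0 a.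
nra.
Qed.

Lemma coef_dominated_prod_sqr (I : finType) (S : {set I}) (t : I -> R) :
  (forall i, `|t i| <= 1) ->
  coef_dominated (\prod_(i in S) ('X - (t i)%:P) ^+ 2) (('X + 1) ^+ (2 * #|S|)).
Proof.
move=> t_le1; rewrite exprM -prodr_const.
apply: (big_rec2 (fun q r => coef_dominated q r)); first exact: coef_dominated11.
move=> i q r _ qr; rewrite ![(_ ^+ 2) * _]mulrC !expr2 !mulrA.
by do 2!apply: coef_dominated_mulXsubC _ (t_le1 i).
Qed.

Lemma size_coef_dominated p P : coef_dominated p P -> (size p <= size P)%N.
Proof.
move=> pP; apply/leq_sizeP => l /leq_sizeP/(_ l (leqnn l)) Pl0.
by have := pP l; rewrite Pl0 normr_le0 => /eqP.
Qed.

Lemma sum_norm_coef_dominated p P d : coef_dominated p P -> (size P <= d)%N ->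
  \sum_(l < d) `|p`_l| <= P.[1].
Proof.
move=> pP size_P; rewrite (horner_coef_wide 1 size_P).
by apply: ler_sum => l _; rewrite expr1n mulr1.
Qed.

End CoefDomination.

Section SeparatingPolynomial.
Variables (R : realFieldType) (I : finType) (t : I -> R) (delta : R).
Hypothesis delta_gt0 : 0 < delta.
Implicit Types (S : {set I}) (x : R).

Definition sep_poly S : {poly R} :=
  1 - (2 / delta ^+ #|S|) *: \prod_(i in S) ('X - (t i)%:P) ^+ 2.

Lemma horner_sep_poly S x :
  (sep_poly S).[x] = 1 - 2 / delta ^+ #|S| * \prod_(i in S) (x - t i) ^+ 2.
Proof.
rewrite hornerD hornerN hornerZ hornerC horner_prod; congr (_ - _ * _).
by apply: eq_bigr => i _; rewrite horner_exp hornerXsubC.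
Qed.

Lemma sep_poly_in S i : i \in S -> (sep_poly S).[t i] = 1.
Proof.
by move=> iS; rewrite horner_sep_poly (bigD1 i) //= subrr expr0n !mul0r mulr0 subr0.
Qed.

Hypothesis t_sep : forall i j, i != j -> delta <= (t i - t j) ^+ 2.

Lemma sep_poly_out S i : i \notin S -> (sep_poly S).[t i] <= -1.
Proof.
move=> iNS; rewrite horner_sep_poly.
have prod_ge : delta ^+ #|S| <= \prod_(j in S) (t i - t j) ^+ 2.
  rewrite -prodr_const; apply: ler_prod => j jS; rewrite ltW //= t_sep //.
  by apply: contraNneq iNS => ->.
have : 1 <= (\prod_(j in S) (t i - t j) ^+ 2) / delta ^+ #|S|.
  by rewrite ler_pdivlMr ?exprn_gt0 // mul1r.
by rewrite mulrAC -mulrA; lra.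
Qed.

Lemma sep_poly_neq0 S : sep_poly S != 0.
Proof.
apply/eqP => p0; have [S0|[i iS]] := set_0Vmem S.
  have := horner_sep_poly S 0; rewrite p0 horner0 S0 big_set0 cards0 expr0.
  lra.
by have := sep_poly_in iS; rewrite p0 horner0 => /eqP; rewrite eq_sym oner_eq0.
Qed.

Hypothesis t_le1 : forall i, `|t i| <= 1.

Lemma size_sep_poly S : (size (sep_poly S) <= (2 * #|S|).+1)%N.
Proof.
apply: leq_trans (size_add _ _) _; rewrite geq_max size_poly1 /= size_opp.
apply: leq_trans (size_scale_leq _ _) _.
apply: leq_trans (size_coef_dominated (coef_dominated_prod_sqr S t_le1)) _.
apply: leq_trans (size_poly_exp_leq _ _) _.
by rewrite -polyC1 size_XaddC mul1n.
Qed.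

Lemma sum_norm_coef_sep_poly S d : (2 * #|S| < d)%N ->
  \sum_(l < d) `|(sep_poly S)`_l| <= 1 + 2 * (4 / delta) ^+ #|S|.
Proof.
move=> S_lt_d; set c := 2 / delta ^+ #|S|.
have c_ge0 : 0 <= c by rewrite divr_ge0 ?exprn_ge0 ?ltW.
have size_r : (size (('X + 1 : {poly R}) ^+ (2 * #|S|)) <= d)%N.
  apply: leq_trans (size_poly_exp_leq _ _) _.
  by rewrite -polyC1 size_XaddC mul1n.
apply: le_trans (_ : _ <= \sum_(l < d) (`|(1 : {poly R})`_l|
    + c * `|(\prod_(i in S) ('X - (t i)%:P) ^+ 2)`_l|)) _.
  apply: ler_sum => l _; rewrite coefB coefZ; apply: le_trans (ler_normB _ _) _.
  by rewrite normrM (ger0_norm c_ge0).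
rewrite big_split /= -mulr_sumr; apply: lerD.
  apply: le_trans (sum_norm_coef_dominated (coef_dominated11 R) _) _.
    by rewrite size_poly1; apply: leq_ltn_trans S_lt_d.
  by rewrite hornerC.
apply: le_trans (ler_wpM2l c_ge0
  (sum_norm_coef_dominated (coef_dominated_prod_sqr S t_le1) size_r)) _.
rewrite horner_exp hornerD hornerX hornerC exprM /c expr_div_n.
have -> : (1 + 1 : R) ^+ 2 = 4 by ring.
by rewrite mulrAC -mulrA.
Qed.

End SeparatingPolynomial.

Definition node_scale (n : nat) : nat := maxn n.-1 1.

Lemma node_scale_gt0 n : (0 < node_scale n)%N.
Proof. by rewrite leq_maxr. Qed.

Section EquispacedNodes.
Variables (R : realFieldType) (n : nat).

Definition node (i : 'I_n) : R := (2 * i%:R - n.-1%:R) / (node_scale n)%:R.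

Lemma natr_node_scale_gt0 : 0 < (node_scale n)%:R :> R.
Proof. by rewrite ltr0n node_scale_gt0. Qed.

Lemma norm_node_le1 i : `|node i| <= 1.
Proof.
rewrite /node normrM normfV normr_nat ler_pdivrMr ?natr_node_scale_gt0 //.
have i_le : (i <= n.-1)%N by have := ltn_ord i; lia.
have n_le : (n.-1 <= node_scale n)%N by rewrite leq_maxl.
rewrite -(ler_nat R) in i_le; rewrite -(ler_nat R) in n_le.
by have := ler0n R i; rewrite mul1r ler_norml; lra.
Qed.

Definition node_gap : R := 4 / (node_scale n)%:R ^+ 2.

Lemma node_gap_gt0 : 0 < node_gap.
Proof. by rewrite divr_gt0 ?exprn_gt0 ?natr_node_scale_gt0. Qed.

Lemma node_sep i j : i != j -> node_gap <= (node i - node j) ^+ 2.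
Proof.
move=> ij; have -> : node i - node j = 2 * (i%:R - j%:R) / (node_scale n)%:R.
  by rewrite /node; field; rewrite gt_eqF ?natr_node_scale_gt0.
rewrite expr_div_n ler_pM2r ?invr_gt0 ?exprn_gt0 ?natr_node_scale_gt0 //.
suff : 1 <= (i%:R - j%:R) ^+ 2 :> R by nra.
have [ij_lt|ij_gt|ij_eq] := ltngtP i j; last by case/eqP: ij; apply: val_inj.
- have : (i.+1%:R <= j%:R :> R) by rewrite ler_nat.
  rewrite -addn1 natrD; nra.
- have : (j.+1%:R <= i%:R :> R) by rewrite ler_nat.
  rewrite -addn1 natrD; nra.
Qed.

Lemma node_n1 i : n = 1%N -> node i = 0.
Proof.
move=> n1; have [i0 n0] : (i = 0 :> nat) /\ n.-1 = 0%N by have := ltn_ord i; lia.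
by rewrite /node i0 n0 mulr0 subr0 mul0r.
Qed.

End EquispacedNodes.

Arguments node {R n} i.
Arguments norm_node_le1 {R n} i.

Lemma powRN_natr_mul_le (R : realType) (a c e : R) (b : nat) :
  0 < a -> 1 <= c -> 0 <= e -> a `^ (- (b%:R)) * c `^ (- e) <= (a ^+ b)^-1.
Proof.
move=> a_gt0 c_ge1 e_ge0; have c_gt0 : 0 < c by apply: lt_le_trans c_ge1.
rewrite (powRN a) (powR_mulrn _ (ltW a_gt0)) -[X in _ <= X]mulr1.
rewrite ler_wpM2l ?invr_ge0 ?exprn_ge0 ?(ltW a_gt0) // powRN invf_le1 ?powR_gt0 //.
by rewrite -[X in X <= _](powRr0 c) ler_powR.
Qed.

Lemma sqrt_odd_le_exp2 (R : rcfType) (k : nat) : (1 <= k)%N ->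
  Num.sqrt ((2 * k + 1)%N%:R : R) <= (2 ^ (2 * k).-1)%N%:R.
Proof.
move=> k_ge1; rewrite -[X in _ <= X]ger0_norm // -sqrtr_sqr ler_sqrt // -natrX ler_nat.
have := ltn_expl (2 * k).-1 (leqnn 2); set x := (2 ^ _)%N; nia.
Qed.

Lemma predn_expn_margin_le (n k : nat) : (1 < n)%N -> (1 <= k)%N ->
  ((1 + 2 * n.-1 ^ (2 * k)) * 2 ^ (2 * k).-1 <= (2 * n) ^ (2 * k))%N.
Proof.
move=> n_gt1 k_ge1; have : (n.-1 ^ (2 * k) < n ^ (2 * k))%N by rewrite ltn_exp2r; lia.
have : (2 ^ (2 * k) = 2 * 2 ^ (2 * k).-1)%N by rewrite -expnS prednK //; lia.
rewrite expnMn; nia.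
Qed.

Section NodeEmbedding.
Variables (R : realType) (n k : nat).
Hypothesis k_ge1 : (1 <= k)%N.

Let d := (2 * k + 1)%N.
Let M : R := (node_scale n)%:R.

Lemma normv_coefv_sep_poly_node_le (S : {set 'I_n}) : (#|S| <= k)%N ->
  normv (coefv d (sep_poly node (node_gap R n) S)) <= 1 + 2 * M ^+ (2 * k).
Proof.
move=> S_le_k; apply: le_trans (normv_le_sum_norm _) _.
under eq_bigr do rewrite mxE.
apply: le_trans (sum_norm_coef_sep_poly (node_gap_gt0 R n) norm_node_le1 _) _.
  by rewrite /d addn1 ltnS leq_mul2l S_le_k orbT.
have M_ge1 : 1 <= M by rewrite /M ler1n node_scale_gt0.
rewrite lerD2l ler_pM2l // /node_gap invf_div mulrC divfK // exprM.
by apply: ler_weXn2l; rewrite ?exprn_ege1.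
Qed.

Lemma normv_coefv_sep_poly_powv_le (S : {set 'I_n}) (i : 'I_n) : (#|S| <= k)%N ->
  normv (coefv d (sep_poly node (node_gap R n) S)) * normv (powv d (node i))
  <= (2 * n)%N%:R ^+ (2 * k).
Proof.
move=> S_le_k; have w_le := normv_coefv_sep_poly_node_le S_le_k.
have w_ge0 : 0 <= normv (coefv d (sep_poly node (node_gap R n) S)) by exact: sqrtr_ge0.
have d_gt0 : (0 < d)%N by rewrite /d addn1.
have [n1|n_neq1] := eqVneq n 1%N.
  rewrite node_n1 // normv_powv0 // mulr1; apply: le_trans w_le _.
  have : (4 <= (2 * n) ^ (2 * k))%N.
    by rewrite n1 (_ : 4 = 2 ^ 2)%N // leq_pexp2l //; lia.
  by rewrite /M /node_scale n1 expr1n -(ler_nat R) natrX; lra.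
have n_gt1 : (1 < n)%N by have := ltn_ord i; lia.
have M_n : M = n.-1%:R by rewrite /M /node_scale; congr _%:R; apply/maxn_idPl; lia.
apply: le_trans (ler_pM w_ge0 (sqrtr_ge0 _) w_le (normv_powv_le _ (norm_node_le1 i))) _.
apply: le_trans (ler_wpM2l _ (sqrt_odd_le_exp2 R k_ge1)) _.
  by rewrite addr_ge0 ?mulr_ge0 ?exprn_ge0 ?ler0n.
rewrite M_n -!natrX -natrM addrC natr1 -natrM ler_nat -add1n.
exact: predn_expn_margin_le.
Qed.

Lemma margin_mul_normv_sep_poly_powv_node_le1 (S : {set 'I_n}) (i : 'I_n) :
  (#|S| <= k)%N ->
  ((2 * n)%N%:R : R) `^ (- ((2 * k)%N%:R)) * ((2 * k)%N%:R : R) `^ (- (1 / 4)) *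
  (normv (coefv d (sep_poly node (node_gap R n) S)) * normv (powv d (node i)))
  <= 1.
Proof.
move=> S_le_k; have n_gt0 : (0 < n)%N by apply: leq_ltn_trans (ltn_ord i).
have norms_ge0 : 0 <= normv (coefv d (sep_poly node (node_gap R n) S))
                      * normv (powv d (node i)).
  by rewrite mulr_ge0 ?sqrtr_ge0.
have margin_le :
    ((2 * n)%N%:R : R) `^ (- ((2 * k)%N%:R)) * ((2 * k)%N%:R : R) `^ (- (1 / 4))
    <= (((2 * n)%N%:R : R) ^+ (2 * k))^-1.
  by rewrite powRN_natr_mul_le ?ltr0n ?ler1n ?muln_gt0 ?divr_ge0.
apply: le_trans (ler_wpM2r norms_ge0 margin_le) _.
rewrite mulrC ler_pdivrMr ?exprn_gt0 ?ltr0n ?muln_gt0 // mul1r.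
exact: normv_coefv_sep_poly_powv_le.
Qed.

End NodeEmbedding.

Theorem corollary1p2 (R : realType) (N n k : nat) (A : 'M[bool]_(N, n)) :
  (1 <= k)%N ->
  (forall j : 'I_N, (#|[set i : 'I_n | A j i]| <= k)%N) ->
  (((((2 * n)%N%:R : R) `^ (- ((2 * k)%N%:R)) *
     ((2 * k)%N%:R : R) `^ (- (1 / 4)))%R)%:E
    <= mrd (2 * k + 1)%N A)%E.
Proof.
move=> k_ge1 row_le_k; set d := (2 * k + 1)%N.
pose p j := sep_poly node (node_gap R n) [set i | A j i].
have size_p j : (size (p j) <= d)%N.
  rewrite /p; apply: leq_trans (size_sep_poly (node_gap R n) norm_node_le1 _) _.
  by rewrite /d addn1 ltnS leq_mul2l row_le_k orbT.
apply: (@mrd_ge_of_sign_pattern _ _ _ _ _ _ (fun j => coefv d (p j))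
                                            (fun i => powv d (node i))).
- by rewrite mulr_ge0 ?powR_ge0.
- by move=> j; rewrite dotv_gt0 // coefv_eq0 // sep_poly_neq0 ?node_gap_gt0.
- by move=> i; apply: dotv_powv_gt0; rewrite /d addn1.
- by move=> j i; apply: margin_mul_normv_sep_poly_powv_node_le1.
- by move=> j i Aji; rewrite dotv_coefv_powv // sep_poly_in // inE.
- move=> j i nAji; rewrite dotv_coefv_powv // sep_poly_out ?inE //.
  + exact: node_gap_gt0.
  + exact: node_sep.
Qed.
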